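(* For any compilation chain whose traces are finite or infinite sequences of events and any trace relation ${\sim}\subseteq\mathit{Trace}_S\times\mathit{Trace}_T$ with existential and universal images $\tilde\tau,\tilde\sigma$, the following are equivalent: (i) $\mathit{SC}^{\sim}$: for every source program $W$ and every finite target trace prefix $m$, if $W{\downarrow}\rightsquigarrow m$ then there exist a target trace $t$ and a source trace $s$ with $m\le t$, $s\sim t$ and $W\rightsquigarrow s$; (ii) $\mathit{SP}^{\tilde\sigma}$: for every $W$ and every target safety property $\pi_T$, $W\models\tilde\sigma(\pi_T)$ implies $W{\downarrow}\models\pi_T$; (iii) $\mathit{SP}^{\tilde\tau}$: for every $W$ and every $\pi_S\subseteq\mathit{Trace}_S$, $W\models\pi_S$ implies $W{\downarrow}\models(\mathit{Safe}\circ\tilde\tau)(\pi_S)$.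
   Context: A compilation chain consists of source (whole) programs $W$, target programs, sets $\mathit{Trace}_S,\mathit{Trace}_T$ of traces, semantics relations $W\rightsquigarrow t$ (W can produce $t$) at both levels, and a compiler $W\mapsto W{\downarrow}$. $W\models\pi$ iff every trace produced by $W$ is in $\pi$. $m\le t$ means $m$ is a finite prefix of $t$; $W\rightsquigarrow m$ for a finite prefix $m$ means there is $t$ with $m\le t$ and $W\rightsquigarrow t$. A target property $\pi$ is a safety property iff for every $t\notin\pi$ there is $m\le t$ such that every $t'$ with $m\le t'$ satisfies $t'\notin\pi$. $\mathit{Safe}(\pi)$ is the intersection of all target safety properties containing $\pi$. The existential image of $\sim$ is $\tilde\tau(\pi)=\{t\mid\exists s.\ s\sim t\wedge s\in\pi\}$ and its universal image is $\tilde\sigma(\pi)=\{s\mid\forall t.\ s\sim t\Rightarrow t\in\pi\}$. *)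

From Stdlib Require Import List.
Import ListNotations.
Set Implicit Arguments.

Inductive trace (E : Type) : Type :=
| tfin : list E -> trace E
| tinf : (nat -> E) -> trace E.

Definition finpref (E : Type) := list E.

Definition prefix (E : Type) (m : finpref E) (t : trace E) : Prop :=
  match t with
  | tfin l => exists l', l = m ++ l'
  | tinf f => m = map f (seq 0 (length m))
  end.

Definition prop (E : Type) := trace E -> Prop.

Definition sat (E P : Type) (sem : P -> trace E -> Prop) (W : P) (pi : prop E) : Prop :=
  forall t, sem W t -> pi t.

Definition sem_pref (E P : Type) (sem : P -> trace E -> Prop) (W : P) (m : finpref E) : Prop :=
  exists t, prefix m t /\ sem W t.

Definition safety (E : Type) (pi : prop E) : Prop :=
  forall t, ~ pi t -> exists m, prefix m t /\ forall t', prefix m t' -> ~ pi t'.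

Definition Safe (E : Type) (pi : prop E) : prop E :=
  fun t => forall S, safety S -> (forall t', pi t' -> S t') -> S t.

Definition tau_img (ES ET : Type) (rel : trace ES -> trace ET -> Prop) (pi : prop ES) : prop ET :=
  fun t => exists s, rel s t /\ pi s.
Definition sigma_img (ES ET : Type) (rel : trace ES -> trace ET -> Prop) (pi : prop ET) : prop ES :=
  fun s => forall t, rel s t -> pi t.

Section Criteria.
Variables (ES ET ProgS ProgT : Type).
Variables (semS : ProgS -> trace ES -> Prop) (semT : ProgT -> trace ET -> Prop).
Variable comp : ProgS -> ProgT.
Variable rel : trace ES -> trace ET -> Prop.

Definition SC_rel : Prop :=
  forall (W : ProgS) (m : finpref ET), sem_pref semT (comp W) m ->
    exists t s, prefix m t /\ rel s t /\ semS W s.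

Definition SP_sigma : Prop :=
  forall (W : ProgS) (piT : prop ET), safety piT ->
    sat semS W (sigma_img rel piT) -> sat semT (comp W) piT.

Definition SP_tau : Prop :=
  forall (W : ProgS) (piS : prop ES),
    sat semS W piS -> sat semT (comp W) (Safe (tau_img rel piS)).
End Criteria.

(* Safe is a closure operator: Safe pi is the least safety property containing
   pi, and a trace lies in it exactly when each of its finite prefixes extends
   to a trace of pi.  By the latter, SC is the statement that every compiled
   program satisfies Safe of the image of its source behaviours; by the former,
   together with the Galois connection between the two images of the trace
   relation, so are SP_sigma and SP_tau. *)
From Stdlib Require Import Classical.
Set Implicit Arguments.

Section SafetyClosure.
Variable E : Type.

Lemma safety_not_prefix (m : finpref E) : safety (fun t => ~ prefix m t).
Proof.
  intros t Ht. apply NNPP in Ht.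
  exists m. split; [exact Ht|].
  intros t' Ht' Hn. exact (Hn Ht').
Qed.

Lemma Safe_ext (pi : prop E) (t : trace E) : pi t -> Safe pi t.
Proof. intros Ht S _ Hincl. exact (Hincl t Ht). Qed.

Lemma Safe_least (pi S : prop E) :
  safety S -> (forall t, pi t -> S t) -> forall t, Safe pi t -> S t.
Proof. intros HS Hincl t Ht. exact (Ht S HS Hincl). Qed.

Lemma Safe_monotone (pi pi' : prop E) :
  (forall t, pi t -> pi' t) -> forall t, Safe pi t -> Safe pi' t.
Proof.
  intros Hincl t Ht S HS Hincl'.
  apply Ht; [exact HS|]. intros t' Ht'. exact (Hincl' t' (Hincl t' Ht')).
Qed.

Lemma safety_Safe (pi : prop E) : safety (Safe pi).
Proof.
  intros t Ht.
  apply not_all_ex_not in Ht as [S HS].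
  apply imply_to_and in HS as [HsafeS HS].
  apply imply_to_and in HS as [Hincl HnS].
  destruct (HsafeS t HnS) as [m [Hm Hext]].
  exists m. split; [exact Hm|].
  intros t' Ht' HSafe. exact (Hext t' Ht' (HSafe S HsafeS Hincl)).
Qed.

Lemma Safe_prefixP (pi : prop E) (t : trace E) :
  Safe pi t <-> forall m, prefix m t -> exists t', prefix m t' /\ pi t'.
Proof.
  split.
  - intros Ht m Hm. apply NNPP. intros Hnone.
    refine (Safe_least (safety_not_prefix m) _ Ht Hm).
    intros t' Ht' Hm'. apply Hnone. exists t'. split; assumption.
  - intros Hext S HS Hincl. apply NNPP. intros HnS.
    destruct (HS t HnS) as [m [Hm Hbad]].
    destruct (Hext m Hm) as [t' [Hm' Ht']].
    exact (Hbad t' Hm' (Hincl t' Ht')).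
Qed.

End SafetyClosure.

Lemma sat_sigma_img (ES ET P : Type) (sem : P -> trace ES -> Prop)
    (rel : trace ES -> trace ET -> Prop) (W : P) (piT : prop ET) :
  sat sem W (sigma_img rel piT) <-> forall t, tau_img rel (sem W) t -> piT t.
Proof.
  split.
  - intros Hsat t [s [Hrel Hs]]. exact (Hsat s Hs t Hrel).
  - intros Hincl s Hs t Hrel. apply Hincl. exists s. split; assumption.
Qed.

Section Criteria.
Variables (ES ET ProgS ProgT : Type).
Variables (semS : ProgS -> trace ES -> Prop) (semT : ProgT -> trace ET -> Prop).
Variable comp : ProgS -> ProgT.
Variable rel : trace ES -> trace ET -> Prop.

(* SP_tau for the strongest property satisfied by W, its own behaviour set. *)
Definition SP_tau_strongest : Prop :=
  forall W : ProgS, sat semT (comp W) (Safe (tau_img rel (semS W))).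

Lemma SC_rel_iff_strongest : SC_rel semS semT comp rel <-> SP_tau_strongest.
Proof.
  split.
  - intros HSC W t Ht. apply Safe_prefixP. intros m Hm.
    destruct (HSC W m (ex_intro _ t (conj Hm Ht))) as [t' [s [Hm' [Hrel Hs]]]].
    exists t'. split; [exact Hm'|]. exists s. split; assumption.
  - intros Hstrong W m [t [Hm Ht]].
    destruct (proj1 (Safe_prefixP _ _) (Hstrong W t Ht) m Hm)
      as [t' [Hm' [s [Hrel Hs]]]].
    exists t', s. auto.
Qed.

Lemma SP_tau_iff_strongest : SP_tau semS semT comp rel <-> SP_tau_strongest.
Proof.
  split.
  - intros HSP W. apply HSP. intros s Hs. exact Hs.
  - intros Hstrong W piS Hsat t Ht.
    refine (Safe_monotone _ _ (Hstrong W t Ht)).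
    intros t' [s [Hrel Hs]]. exists s. split; [exact Hrel | exact (Hsat s Hs)].
Qed.

Lemma SP_sigma_iff_strongest : SP_sigma semS semT comp rel <-> SP_tau_strongest.
Proof.
  split.
  - intros HSP W. apply HSP; [apply safety_Safe|].
    apply sat_sigma_img. apply Safe_ext.
  - intros Hstrong W piT HpiT Hsat t Ht.
    exact (Safe_least HpiT (proj1 (sat_sigma_img _ _ _ _) Hsat) (Hstrong W t Ht)).
Qed.

End Criteria.

Theorem theoremB1 (ES ET ProgS ProgT : Type)
  (semS : ProgS -> trace ES -> Prop) (semT : ProgT -> trace ET -> Prop)
  (comp : ProgS -> ProgT) (rel : trace ES -> trace ET -> Prop) :
  (SC_rel semS semT comp rel <-> SP_sigma semS semT comp rel) /\
  (SC_rel semS semT comp rel <-> SP_tau semS semT comp rel).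
Proof.
  rewrite SC_rel_iff_strongest, SP_sigma_iff_strongest, SP_tau_iff_strongest.
  split; reflexivity.
Qed.
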